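(* Let $v,w,X,Y\in\mathbb{R}^d$ with $\|X\|<\|v\|$ and $\|Y\|<\|w\|$, and define $$h(v,w,X,Y):=-\frac{\|X\|\|Y\|}{\|v\|\|w\|}+\sqrt{1-\frac{\|X\|^2}{\|v\|^2}}\sqrt{1-\frac{\|Y\|^2}{\|w\|^2}}.$$ If $\alpha(v,w)\leq h(v,w,X,Y)$, then $$\alpha(v+X,w+Y)\leq \alpha(v,w)\,h(v,w,X,Y)+\sqrt{1-\alpha(v,w)^2}\sqrt{1-h(v,w,X,Y)^2}.$$
   Context: For nonzero $a,b\in\mathbb{R}^d$, the cosine similarity is $\alpha(a,b)=\frac{\langle a,b\rangle}{\|a\|\|b\|}$. *)

From mathcomp Require Import all_boot all_order all_algebra.
Set Implicit Arguments. Unset Strict Implicit. Unset Printing Implicit Defensive.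
Import Order.TTheory GRing.Theory Num.Theory.
Local Open Scope ring_scope.

Definition inner (R : rcfType) (d : nat) (a b : 'rV[R]_d) : R :=
  \sum_(i < d) a 0 i * b 0 i.

Definition enorm (R : rcfType) (d : nat) (a : 'rV[R]_d) : R :=
  Num.sqrt (inner a a).

(* cosine similarity alpha(a,b) = <a,b> / (|a| |b|)  (meaningful for a, b nonzero) *)
Definition cossim (R : rcfType) (d : nat) (a b : 'rV[R]_d) : R :=
  inner a b / (enorm a * enorm b).

Definition hfun (R : rcfType) (d : nat) (v w X Y : 'rV[R]_d) : R :=
  - (enorm X * enorm Y) / (enorm v * enorm w)
  + Num.sqrt (1 - enorm X ^+ 2 / enorm v ^+ 2)
    * Num.sqrt (1 - enorm Y ^+ 2 / enorm w ^+ 2).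

(* Read cosine similarities as cosines of angles in [0, pi].  With
   sin t1 = |X|/|v| and sin t2 = |Y|/|w|, h is cos (t1 + t2), and the claim is
   that the angle between v + X and w + Y is at least angle(v, w) - t1 - t2.
   Adding X to v turns it by at most t1, the half-angle subtended by the ball
   of radius |X| around v; and angles between directions satisfy the triangle
   inequality, which is Cauchy-Schwarz applied to the components orthogonal
   to a third vector.  Chaining the two perturbations gives the bound.  There
   is no arccos over a real closed field, so angles are handled through their
   cosines, and the angle arithmetic becomes monotonicity and addition
   formulas for the cosine of a difference. *)

From mathcomp Require Import all_boot all_order all_algebra.
From mathcomp Require Import ring lra.
Import Order.TTheory GRing.Theory Num.Theory.
Local Open Scope ring_scope.

Section CosineDistance.
Context {R : rcfType}.
Implicit Types a k m s t : R.

(* For angles p, q in [0, pi] with cosines k, m, [cos_dist k m] is cos (p - q);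
   for angles t1, t2 in [0, pi/2] with sines s1, s2, [cos_add s1 s2] is
   cos (t1 + t2). *)
Definition sin_of k := Num.sqrt (1 - k ^+ 2).

Definition cos_dist k m := k * m + sin_of k * sin_of m.

Definition cos_add s1 s2 := sin_of s1 * sin_of s2 - s1 * s2.

Lemma sin_of_ge0 k : 0 <= sin_of k.
Proof. exact: sqrtr_ge0. Qed.

Lemma sin_of_le1 k : sin_of k <= 1.
Proof. by rewrite -[leRHS]sqrtr1 ler_wsqrtr // gerBl sqr_ge0. Qed.

Lemma sqr_sin_of k : -1 <= k <= 1 -> sin_of k ^+ 2 = 1 - k ^+ 2.
Proof. by move=> /andP[k_ge k_le]; rewrite sqr_sqrtr //; nra. Qed.

Lemma sin_ofN k : sin_of (- k) = sin_of k.
Proof. by rewrite /sin_of sqrrN. Qed.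

Lemma sin_of_eq s k : 0 <= s -> s ^+ 2 + k ^+ 2 = 1 -> sin_of k = s.
Proof. by move=> s_ge0 sk; rewrite /sin_of -sk addrK sqrtr_sqr ger0_norm. Qed.

Lemma sin_ofK s : 0 <= s <= 1 -> sin_of (sin_of s) = s.
Proof.
case/andP=> s_ge0 s_le1; apply: sin_of_eq => //.
by rewrite sqr_sin_of ?subrKC //; apply/andP; split; nra.
Qed.

Lemma le_sqrtM t A B : 0 <= A -> t ^+ 2 <= A * B -> t <= Num.sqrt A * Num.sqrt B.
Proof.
move=> A_ge0 tAB; rewrite -sqrtrM // (le_trans (ler_norm t)) // -sqrtr_sqr.
exact: ler_wsqrtr.
Qed.

Lemma sin_of_le k m : m ^+ 2 <= k ^+ 2 -> sin_of k <= sin_of m.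
Proof. by move=> mk; apply: ler_wsqrtr; rewrite lerB. Qed.

(* sin (p - q) for the angles p >= q with cosines k <= m. *)
Lemma sin_sub_ge0 k m : k <= m -> 0 <= m * sin_of k - k * sin_of m.
Proof.
move=> km; have sk := sin_of_ge0 k; have sm := sin_of_ge0 m.
have [k_ge0|k_lt0] := lerP 0 k.
  have smk : sin_of m <= sin_of k by apply: sin_of_le; nra.
  nra.
have [m_ge0|m_lt0] := lerP 0 m; first nra.
have skm : sin_of k <= sin_of m by apply: sin_of_le; nra.
nra.
Qed.

Lemma cos_distC k m : cos_dist k m = cos_dist m k.
Proof. by rewrite /cos_dist mulrC (mulrC (sin_of k)). Qed.

Lemma cos_distNN k m : cos_dist (- k) (- m) = cos_dist k m.
Proof. by rewrite /cos_dist !sin_ofN mulrNN. Qed.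

Lemma sin_of_cos_dist k m : -1 <= k -> k <= m -> m <= 1 ->
  sin_of (cos_dist k m) = m * sin_of k - k * sin_of m.
Proof.
move=> k_ge km m_le; apply: sin_of_eq; first exact: sin_sub_ge0.
have: (m ^+ 2 + sin_of m ^+ 2) * (k ^+ 2 + sin_of k ^+ 2) = 1.
  by rewrite !sqr_sin_of ?subrKC ?mulr1 //; apply/andP; split; lra.
by rewrite /cos_dist => <-; ring.
Qed.

(* Multiplied by [sin_of k + sin_of k'], the increment factors as [k' - k]
   times a sum of two nonnegative sines of differences. *)
Lemma cos_dist_le_l k k' m : -1 <= k -> k <= k' -> k' <= m -> m <= 1 ->
  cos_dist k m <= cos_dist k' m.
Proof.
move=> k_ge kk' k'm m_le.
have sk := sin_of_ge0 k; have sk' := sin_of_ge0 k'.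
have sk2 : sin_of k ^+ 2 = 1 - k ^+ 2 by apply: sqr_sin_of; apply/andP; split; lra.
have sk'2 : sin_of k' ^+ 2 = 1 - k' ^+ 2 by apply: sqr_sin_of; apply/andP; split; lra.
have sin1 := sin_sub_ge0 _ _ (le_trans kk' k'm).
have sin2 := sin_sub_ge0 _ _ k'm.
have E : (sin_of k + sin_of k') * (cos_dist k' m - cos_dist k m) =
    (k' - k) * ((m * sin_of k - k * sin_of m) + (m * sin_of k' - k' * sin_of m)).
  have -> : (sin_of k + sin_of k') * (cos_dist k' m - cos_dist k m) =
      (sin_of k + sin_of k') * (k' - k) * m
      + sin_of m * (sin_of k' ^+ 2 - sin_of k ^+ 2) by rewrite /cos_dist; ring.
  by rewrite sk2 sk'2; ring.
have [s0|s_gt0] := eqVneq (sin_of k + sin_of k') 0.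
  have sk0 : sin_of k = 0 by lra.
  have sk'0 : sin_of k' = 0 by lra.
  by rewrite sk0 in sk2; rewrite sk'0 in sk'2; rewrite /cos_dist sk0 sk'0; nra.
have s_pos : 0 < sin_of k + sin_of k' by rewrite lt_def s_gt0 addr_ge0.
rewrite -subr_ge0 -(pmulr_rge0 _ s_pos) E; nra.
Qed.

Lemma cos_dist_le k k' m m' : -1 <= k -> k <= k' -> k' <= m -> m <= m' -> m' <= 1 ->
  cos_dist k m' <= cos_dist k' m.
Proof.
move=> k_ge kk' k'm mm' m'_le.
apply: (@le_trans _ _ (cos_dist k' m')); first by apply: cos_dist_le_l; lra.
rewrite (cos_distC k') -(cos_distNN m') (cos_distC k') -(cos_distNN m).
apply: cos_dist_le_l; lra.
Qed.

Section AngleSum.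
Variables s1 s2 : R.
Hypotheses (s1_ge0 : 0 <= s1) (s1_le1 : s1 <= 1) (s2_ge0 : 0 <= s2) (s2_le1 : s2 <= 1).

Let s1_bound : -1 <= s1 <= 1. Proof. by move: s1_ge0 s1_le1 => *; apply/andP; split; lra. Qed.
Let s2_bound : -1 <= s2 <= 1. Proof. by move: s2_ge0 s2_le1 => *; apply/andP; split; lra. Qed.

Lemma cos_add_le : cos_add s1 s2 <= sin_of s1.
Proof.
rewrite /cos_add lerBlDr ler_wpDr ?mulr_ge0 //.
by rewrite ler_piMr ?sin_of_ge0 ?sin_of_le1.
Qed.

Lemma sin_of_cos_add : sin_of (cos_add s1 s2) = s1 * sin_of s2 + sin_of s1 * s2.
Proof.
apply: sin_of_eq; first by rewrite addr_ge0 // mulr_ge0 // sin_of_ge0.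
have := sqr_sin_of _ s1_bound; have := sqr_sin_of _ s2_bound.
rewrite /cos_add => c2 c1.
have -> : 1 = (sin_of s1 ^+ 2 + s1 ^+ 2) * (sin_of s2 ^+ 2 + s2 ^+ 2)
  by rewrite c1 c2 !subrK mulr1.
ring.
Qed.

Lemma cos_dist_cos_add : cos_dist (cos_add s1 s2) (sin_of s1) = sin_of s2.
Proof.
rewrite /cos_dist sin_of_cos_add sin_ofK ?s1_ge0 //.
have := sqr_sin_of _ s1_bound; rewrite /cos_add => c1.
rewrite [RHS](_ : _ = sin_of s2 * (sin_of s1 ^+ 2 + s1 ^+ 2)); first ring.
by rewrite c1 subrK mulr1.
Qed.

Lemma cos_dist_le_sin_of a : -1 <= a -> a <= cos_add s1 s2 ->
  cos_dist a (sin_of s1) <= sin_of s2.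
Proof.
move=> a_ge ah; rewrite -cos_dist_cos_add.
by apply: cos_dist_le; rewrite ?cos_add_le ?sin_of_le1.
Qed.

Lemma cos_dist_cos_addA a : -1 <= a -> a <= cos_add s1 s2 ->
  cos_dist (cos_dist a (sin_of s1)) (sin_of s2) = cos_dist a (cos_add s1 s2).
Proof.
move=> a_ge ah.
rewrite {1}/cos_dist sin_of_cos_dist ?sin_of_le1 ?(le_trans ah cos_add_le) //.
rewrite /cos_dist !sin_ofK ?s1_ge0 ?s2_ge0 // sin_of_cos_add /cos_add; ring.
Qed.

End AngleSum.

End CosineDistance.

Section InnerProduct.
Context {R : rcfType} {d : nat}.
Implicit Types a b c v x y z : 'rV[R]_d.

Lemma innerC a b : inner a b = inner b a.
Proof. by apply: eq_bigr => i _; rewrite mulrC. Qed.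

Lemma innerDl a b c : inner (a + b) c = inner a c + inner b c.
Proof. by rewrite /inner -big_split; apply: eq_bigr => i _; rewrite mxE mulrDl. Qed.

Lemma innerZl (r : R) a b : inner (r *: a) b = r * inner a b.
Proof. by rewrite /inner mulr_sumr; apply: eq_bigr => i _; rewrite mxE mulrA. Qed.

Lemma innerNl a b : inner (- a) b = - inner a b.
Proof. by rewrite -scaleN1r innerZl mulN1r. Qed.

Lemma innerDr a b c : inner a (b + c) = inner a b + inner a c.
Proof. by rewrite innerC innerDl !(innerC a). Qed.

Lemma innerZr (r : R) a b : inner a (r *: b) = r * inner a b.
Proof. by rewrite innerC innerZl innerC. Qed.

Lemma innerNr a b : inner a (- b) = - inner a b.
Proof. by rewrite innerC innerNl innerC. Qed.

Lemma inner_self_ge0 a : 0 <= inner a a.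
Proof. by rewrite sumr_ge0 // => i _; rewrite -expr2 sqr_ge0. Qed.

Lemma inner_self0 a b : inner a a = 0 -> inner a b = 0.
Proof.
move=> /eqP; rewrite psumr_eq0 => [/allP a0|i _]; last by rewrite -expr2 sqr_ge0.
rewrite /inner big1 // => i _.
by move: (a0 i (mem_index_enum i)); rewrite /= mulf_eq0 orbb => /eqP ->; rewrite mul0r.
Qed.

Lemma inner_sqr_le a b : inner a b ^+ 2 <= inner a a * inner b b.
Proof.
have [a0|a_neq0] := eqVneq (inner a a) 0.
  by rewrite (inner_self0 _ b a0) a0 expr0n mul0r.
have a_gt0 : 0 < inner a a by rewrite lt_def a_neq0 inner_self_ge0.
rewrite -subr_ge0 -(pmulr_rge0 _ a_gt0).
set u := inner a a *: b - inner a b *: a.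
suff -> : inner a a * (inner a a * inner b b - inner a b ^+ 2) = inner u u
  by exact: inner_self_ge0.
rewrite !(innerDl, innerDr, innerNl, innerNr, innerZl, innerZr) (innerC b a); ring.
Qed.

Lemma gram_sqr_le x y z :
  (inner x x * inner y z - inner x y * inner x z) ^+ 2
  <= (inner x x * inner y y - inner x y ^+ 2) * (inner x x * inner z z - inner x z ^+ 2).
Proof.
have [x0|x_neq0] := eqVneq (inner x x) 0.
  by rewrite x0 (inner_self0 _ y x0) (inner_self0 _ z x0); lra.
have x_gt0 : 0 < inner x x by rewrite lt_def x_neq0 inner_self_ge0.
pose proj u := inner x x *: u - inner x u *: x.
have inner_proj u w :
    inner (proj u) (proj w) = inner x x * (inner x x * inner u w - inner x u * inner x w).
  rewrite !(innerDl, innerDr, innerNl, innerNr, innerZl, innerZr) (innerC u x).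
  ring.
have := inner_sqr_le (proj y) (proj z); rewrite !inner_proj => cs_proj.
by rewrite -(ler_pM2l (exprn_gt0 2 x_gt0)); lra.
Qed.

Lemma enorm_ge0 a : 0 <= enorm a.
Proof. exact: sqrtr_ge0. Qed.

Lemma sqr_enorm a : enorm a ^+ 2 = inner a a.
Proof. by rewrite sqr_sqrtr // inner_self_ge0. Qed.

Lemma enormN a : enorm (- a) = enorm a.
Proof. by rewrite /enorm innerNl innerNr opprK. Qed.

Lemma inner_le_enorm a b : inner a b <= enorm a * enorm b.
Proof. exact/le_sqrtM/inner_sqr_le/inner_self_ge0. Qed.

Lemma inner_cossim a b : 0 < enorm a -> 0 < enorm b ->
  inner a b = cossim a b * (enorm a * enorm b).
Proof. by move=> a_gt0 b_gt0; rewrite /cossim mulfVK // mulf_neq0 // gt_eqF. Qed.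

Lemma cossim_bound a b : 0 < enorm a -> 0 < enorm b -> -1 <= cossim a b <= 1.
Proof.
move=> a_gt0 b_gt0; have ab_gt0 := mulr_gt0 a_gt0 b_gt0.
have := inner_le_enorm a b; have := inner_le_enorm (- a) b.
rewrite innerNl enormN (inner_cossim _ _ a_gt0 b_gt0) => *.
by apply/andP; split; nra.
Qed.

Lemma cossim_le_cos_dist x y z : 0 < enorm x -> 0 < enorm y -> 0 < enorm z ->
  cossim y z <= cos_dist (cossim x y) (cossim x z).
Proof.
move=> x_gt0 y_gt0 z_gt0.
have /andP[a_ge a_le] := cossim_bound _ _ x_gt0 y_gt0.
have := gram_sqr_le x y z; rewrite -!sqr_enorm.
rewrite (inner_cossim _ _ x_gt0 y_gt0) (inner_cossim _ _ x_gt0 z_gt0) (inner_cossim _ _ y_gt0 z_gt0).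
set a := cossim x y in a_ge a_le *; set b := cossim x z; set g := cossim y z.
have F_gt0 : 0 < (enorm x ^+ 2 * enorm y * enorm z) ^+ 2.
  by rewrite exprn_gt0 // !mulr_gt0 // exprn_gt0.
rewrite [leLHS](_ : _ = (enorm x ^+ 2 * enorm y * enorm z) ^+ 2 * (g - a * b) ^+ 2); last ring.
rewrite [leRHS](_ : _ = (enorm x ^+ 2 * enorm y * enorm z) ^+ 2
                        * ((1 - a ^+ 2) * (1 - b ^+ 2))); last ring.
rewrite ler_pM2l // => gram.
suff : g - a * b <= sin_of a * sin_of b by rewrite /cos_dist; lra.
by apply: le_sqrtM => //; nra.
Qed.

Lemma enorm_add_gt0 v x : enorm x < enorm v -> 0 < enorm (v + x).
Proof.
move=> xv; have x_ge0 := enorm_ge0 x.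
have t_ge := inner_le_enorm v (- x); rewrite innerNr enormN in t_ge.
have : 0 < enorm (v + x) ^+ 2.
  by rewrite sqr_enorm !(innerDl, innerDr) (innerC x v) -!sqr_enorm; nra.
by move=> /gt_eqF; rewrite sqrf_eq0 lt_def enorm_ge0 andbT => ->.
Qed.

Lemma cossim_add_ge v x : enorm x < enorm v -> sin_of (enorm x / enorm v) <= cossim v (v + x).
Proof.
move=> xv; have x_ge0 := enorm_ge0 x; have v_gt0 := le_lt_trans x_ge0 xv.
have vx_gt0 := enorm_add_gt0 _ _ xv.
have t_ge := inner_le_enorm v (- x); rewrite innerNr enormN in t_ge.
have sqr_vx : enorm (v + x) ^+ 2 = enorm v ^+ 2 + 2 * inner v x + enorm x ^+ 2.
  by rewrite !sqr_enorm !(innerDl, innerDr) (innerC x v); ring.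
have cos_vx : cossim v (v + x) * (enorm v * enorm (v + x)) = enorm v ^+ 2 + inner v x.
  by rewrite -(inner_cossim _ _ v_gt0 vx_gt0) innerDr sqr_enorm.
move: (enorm v) (enorm x) (enorm (v + x)) (inner v x) (cossim v (v + x))
  v_gt0 x_ge0 xv vx_gt0 t_ge sqr_vx cos_vx => V X P t c V_gt0 X_ge0 XV P_gt0 t_ge sqr_P cos_c.
have VP_gt0 : 0 < V * P by rewrite mulr_gt0.
have c_ge0 : 0 <= c.
  by rewrite -(pmulr_lge0 _ VP_gt0) cos_c; nra.
rewrite -(ger0_norm c_ge0) -sqrtr_sqr; apply: ler_wsqrtr.
rewrite -(ler_pM2l (exprn_gt0 2 VP_gt0)).
have -> : (V * P) ^+ 2 * c ^+ 2 = (V ^+ 2 + t) ^+ 2 by rewrite -cos_c; ring.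
have -> : (V * P) ^+ 2 * (1 - (X / V) ^+ 2) = P ^+ 2 * (V ^+ 2 - X ^+ 2).
  by field; rewrite gt_eqF.
rewrite sqr_P -subr_ge0.
have -> : (V ^+ 2 + t) ^+ 2 - (V ^+ 2 + 2 * t + X ^+ 2) * (V ^+ 2 - X ^+ 2) = (t + X ^+ 2) ^+ 2
  by ring.
exact: sqr_ge0.
Qed.

Lemma hfunE v w x y : hfun v w x y = cos_add (enorm x / enorm v) (enorm y / enorm w).
Proof. by rewrite /hfun /cos_add /sin_of !expr_div_n mulf_div mulNr addrC. Qed.

End InnerProduct.

Theorem lemma2 (R : rcfType) (d : nat) (v w X Y : 'rV[R]_d)
  (hX : enorm X < enorm v) (hY : enorm Y < enorm w)
  (hle : cossim v w <= hfun v w X Y) :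
  cossim (v + X) (w + Y) <=
    cossim v w * hfun v w X Y
    + Num.sqrt (1 - cossim v w ^+ 2) * Num.sqrt (1 - hfun v w X Y ^+ 2).
Proof.
have v_gt0 := le_lt_trans (enorm_ge0 X) hX; have w_gt0 := le_lt_trans (enorm_ge0 Y) hY.
have p_gt0 := enorm_add_gt0 _ _ hX; have q_gt0 := enorm_add_gt0 _ _ hY.
have s1_ge0 : 0 <= enorm X / enorm v by rewrite divr_ge0 ?enorm_ge0 ?ltW.
have s1_le1 : enorm X / enorm v <= 1 by rewrite ler_pdivrMr // mul1r ltW.
have s2_ge0 : 0 <= enorm Y / enorm w by rewrite divr_ge0 ?enorm_ge0 ?ltW.
have s2_le1 : enorm Y / enorm w <= 1 by rewrite ler_pdivrMr // mul1r ltW.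
change (cossim (v + X) (w + Y) <= cos_dist (cossim v w) (hfun v w X Y)).
rewrite hfunE in hle *.
have /andP[a_ge _] := cossim_bound _ _ v_gt0 w_gt0.
have /andP[_ vp_le] := cossim_bound _ _ v_gt0 p_gt0.
have /andP[wp_ge _] := cossim_bound _ _ w_gt0 p_gt0.
have /andP[_ wq_le] := cossim_bound _ _ w_gt0 q_gt0.
have a_le_c1 : cossim v w <= sin_of (enorm X / enorm v).
  by apply: le_trans hle _; apply: cos_add_le.
have wp_le : cossim w (v + X) <= cos_dist (cossim v w) (sin_of (enorm X / enorm v)).
  apply: le_trans (cossim_le_cos_dist _ _ _ v_gt0 w_gt0 p_gt0) _.
  by apply: cos_dist_le => //; apply: cossim_add_ge.
rewrite -cos_dist_cos_addA //.
apply: le_trans (cossim_le_cos_dist _ _ _ w_gt0 p_gt0 q_gt0) _.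
by apply: cos_dist_le => //; [apply: cos_dist_le_sin_of | apply: cossim_add_ge].
Qed.
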